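(* Let $d\geq 2$ and let $g:[-1,1]\to(-\infty,\infty]$ be a function that is finite and continuous on $[-1,1)$, differentiable on $(-1,1)$, with $g(1)=\lim_{t\to1^-}g(t)$, and such that $g''$ exists and is convex on $(-1,1)$. Let $\widetilde\omega_{2d}=\{\pm\mathbf e_1,\ldots,\pm\mathbf e_d\}$, where $\mathbf e_1,\dots,\mathbf e_d$ is the standard basis of $\mathbb R^d$. Then the potential $$p^g(\widetilde\omega_{2d},\mathbf x):=\sum_{\mathbf y\in\widetilde\omega_{2d}}g(\mathbf x\cdot\mathbf y)$$ attains its absolute minimum over $S^{d-1}$ at every point of $S^{d-1}$ each of whose coordinates equals $1/\sqrt d$ or $-1/\sqrt d$. Furthermore, $$P^g(\widetilde\omega_{2d},S^{d-1}):=\min_{\mathbf x\in S^{d-1}}p^g(\widetilde\omega_{2d},\mathbf x)=d\left(g\left(\tfrac1{\sqrt d}\right)+g\left(-\tfrac1{\sqrt d}\right)\right).$$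
   Context: $S^{d-1}$ is the unit sphere in $\mathbb R^d$. *)

From HB Require Import structures.
From mathcomp Require Import all_boot all_order all_algebra.
From mathcomp Require Import all_classical all_reals all_analysis.
Set Implicit Arguments. Unset Strict Implicit. Unset Printing Implicit Defensive.
Import Order.TTheory GRing.Theory Num.Theory.
Import numFieldNormedType.Exports.
Local Open Scope classical_set_scope.
Local Open Scope ring_scope.

Definition dotp (R : realType) (d : nat) (x y : 'rV[R]_d) : R :=
  \sum_(i < d) x 0 i * y 0 i.

Definition sphere (R : realType) (d : nat) : set 'rV[R]_d :=
  [set x | dotp x x = 1].
Arguments sphere : clear implicits.

Definition ebasis (R : realType) (d : nat) (i : 'I_d) : 'rV[R]_d :=
  delta_mx 0 i.
Arguments ebasis R {d} i.

Definition cross_polytope (R : realType) (d : nat) : seq 'rV[R]_d :=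
  [seq ebasis R i | i <- enum 'I_d] ++ [seq - ebasis R i | i <- enum 'I_d].
Arguments cross_polytope : clear implicits.

Definition potential (R : realType) (d : nat) (g : R -> \bar R)
  (omega : seq 'rV[R]_d) (x : 'rV[R]_d) : \bar R :=
  (\sum_(y <- omega) g (dotp x y))%E.

Definition min_potential (R : realType) (d : nat) (g : R -> \bar R)
  (omega : seq 'rV[R]_d) : \bar R :=
  ereal_inf [set potential g omega x | x in sphere R d].

(* Put a = 1/sqrt d and c = (g'(a) - g'(-a)) / (2a).  Convexity of g'' makes
   t |-> g''(t) + g''(-t) nondecreasing on [0,1), so (g'(t) - g'(-t)) / t is
   nondecreasing there; hence the even function g(t) + g(-t) - c t^2, whose
   derivative is t ((g'(t) - g'(-t)) / t - 2c), is smallest at t = a.  Summing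
   g(z_i) + g(-z_i) >= g(a) + g(-a) + c (z_i^2 - a^2) over the coordinates of
   z in S^{d-1} gives p(z) >= d (g(a) + g(-a)), with equality when every
   |z_i| = a. *)

From mathcomp Require Import all_boot all_order all_algebra.
From mathcomp Require Import all_classical all_reals all_analysis.
From mathcomp Require Import ring lra.
Set Implicit Arguments. Unset Strict Implicit. Unset Printing Implicit Defensive.
Import Order.TTheory GRing.Theory Num.Theory.
Import numFieldNormedType.Exports.
Local Open Scope classical_set_scope.
Local Open Scope ring_scope.

Lemma inv_sqrt_natr_gt0 (R : rcfType) n : (0 < n)%N -> 0 < 1 / Num.sqrt n%:R :> R.
Proof. by move=> n0; rewrite divr_gt0 // sqrtr_gt0 ltr0n. Qed.

Lemma inv_sqrt_natr_lt1 (R : rcfType) n : (1 < n)%N -> 1 / Num.sqrt n%:R < 1 :> R.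
Proof.
move=> n1; have sqrt_gt1 : 1 < Num.sqrt n%:R :> R.
  by rewrite -[X in X < _]sqrtr1 ltr_sqrt ?ltr0n ?ltr1n // (ltn_trans _ n1).
by rewrite ltr_pdivrMr ?mul1r // (lt_trans ltr01).
Qed.

Lemma natr_inv_sqrt_sq (R : rcfType) n : (0 < n)%N ->
  n%:R * (1 / Num.sqrt n%:R) ^+ 2 = 1 :> R.
Proof.
move=> n0; rewrite expr_div_n expr1n sqr_sqrtr ?ler0n // mul1r divff //.
by rewrite pnatr_eq0 -lt0n.
Qed.

Section Reflection.
Variable R : realType.
Implicit Types (f h : R -> R) (s t u v : R).

Definition reflect_sum f t := f t + f (- t).
Definition reflect_diff f t := f t - f (- t).

Definition convex_on_unit h := forall a b l : R,
  -1 < a < 1 -> -1 < b < 1 -> 0 <= l <= 1 ->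
  h (l * a + (1 - l) * b) <= l * h a + (1 - l) * h b.

Lemma is_derive_compN f t :
  derivable f (- t) 1 -> is_derive t 1 (f \o -%R) (- derive1 f (- t)).
Proof.
move=> /derivableP fd; rewrite -mulrN1 derive1E.
exact: (is_derive1_comp fd (is_deriveNid t 1)).
Qed.

Lemma is_derive_reflect_sum f t : derivable f t 1 -> derivable f (- t) 1 ->
  is_derive t 1 (reflect_sum f) (reflect_diff (derive1 f) t).
Proof.
move=> /derivableP fd /is_derive_compN fNd.
rewrite /reflect_sum /reflect_diff derive1E.
exact: (is_derive_eq (is_deriveD fd fNd)).
Qed.

Lemma is_derive_reflect_diff f t : derivable f t 1 -> derivable f (- t) 1 ->
  is_derive t 1 (reflect_diff f) (reflect_sum (derive1 f) t).
Proof.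
move=> /derivableP fd /is_derive_compN fNd.
rewrite /reflect_sum /reflect_diff derive1E.
by have := is_deriveB fd fNd; rewrite opprK.
Qed.

Lemma convex_reflect_sum_le h : convex_on_unit h ->
  {in `[0, 1[ &, {homo reflect_sum h : s s' / s <= s'}}.
Proof.
move=> hconv s s'; rewrite !in_itv /= => /andP[s0 _] /andP[_ s'1] ss'.
have [s'0|s'0] := eqVneq s' 0; first by have -> : s = s' by lra.
have s'p : 0 < s' by rewrite lt_def s'0 (le_trans s0 ss').
(* [s] and [-s] are the same convex combination of [s'] and [-s'], with swapped weights *)
set l := (s' + s) / (2 * s').
have l01 : 0 <= l <= 1.
  by apply/andP; split; [apply: divr_ge0 | rewrite ler_pdivrMr]; lra.
have s'I : -1 < s' < 1 by apply/andP; split; lra.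
have Ns'I : -1 < - s' < 1 by apply/andP; split; lra.
have hs : h s <= l * h s' + (1 - l) * h (- s').
  by have := hconv _ _ _ s'I Ns'I l01; congr (h _ <= _); rewrite /l; field.
have hNs : h (- s) <= l * h (- s') + (1 - l) * h s'.
  by have := hconv _ _ _ Ns'I s'I l01; congr (h _ <= _); rewrite /l; field.
rewrite /reflect_sum; lra.
Qed.

Section ReflectDiffSlope.
Variable h : R -> R.
Hypothesis h_derivable : forall t, -1 < t < 1 -> derivable h t 1.
Hypothesis dh_convex : convex_on_unit (derive1 h).

Lemma reflect_diff_slope_le u v : 0 <= u -> u <= v -> v < 1 ->
  v * reflect_diff h u <= u * reflect_diff h v.
Proof.
move=> u0 uv v1.
have dphi (p q : R) : -1 <= p -> q <= 1 -> forall x, x \in `]p, q[ ->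
    is_derive x 1 (reflect_diff h) (reflect_sum (derive1 h) x).
  move=> p1 q1 x; rewrite in_itv /= => /andP[px xq].
  by apply: is_derive_reflect_diff; apply: h_derivable; apply/andP; split; lra.
have phi_cont (p q : R) : -1 < p -> q < 1 ->
    {within `[p, q], continuous (reflect_diff h)}.
  move=> p1 q1; apply: derivable_within_continuous => x.
  rewrite in_itv /= => /andP[px xq].
  by apply: (@ex_derive _ _ _ _ _ _ _ (dphi (-1) 1 _ _ x _)); rewrite ?in_itv /=; lra.
have phi0 : reflect_diff h 0 = 0 by rewrite /reflect_diff oppr0 subrr.
have [c1 + phiu] := MVT_segment u0 (dphi 0 u ltac:(lra) ltac:(lra))
  (phi_cont 0 u ltac:(lra) ltac:(lra)).
rewrite in_itv /= phi0 !subr0 in phiu * => /andP[c10 c1u].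
have [c2 + phiv] := MVT_segment uv (dphi u v ltac:(lra) ltac:(lra))
  (phi_cont u v ltac:(lra) ltac:(lra)).
rewrite in_itv /= => /andP[c2u c2v].
have mono : reflect_sum (derive1 h) c1 <= reflect_sum (derive1 h) c2.
  apply: (convex_reflect_sum_le dh_convex); rewrite ?in_itv /=;
    by try (apply/andP; split); lra.
rewrite -subr_ge0 -(subrK (reflect_diff h u) (reflect_diff h v)) phiv phiu.
have -> : u * (reflect_sum (derive1 h) c2 * (v - u) + reflect_sum (derive1 h) c1 * u)
    - v * (reflect_sum (derive1 h) c1 * u)
    = u * (v - u) * (reflect_sum (derive1 h) c2 - reflect_sum (derive1 h) c1).
  by ring.
by apply: mulr_ge0; [apply: mulr_ge0|]; lra.
Qed.

End ReflectDiffSlope.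

Section ReflectSumMinorant.
Variable f : R -> R.
Hypothesis f_derivable : forall t, -1 < t < 1 -> derivable f t 1.
Hypothesis df_derivable : forall t, -1 < t < 1 -> derivable (derive1 f) t 1.
Hypothesis d2f_convex : convex_on_unit (derive1 (derive1 f)).

Lemma reflect_sum_quadratic_ge (a t : R) : 0 < a -> a < 1 -> -1 < t < 1 ->
  reflect_sum f a + reflect_diff (derive1 f) a / (2 * a) * (t ^+ 2 - a ^+ 2)
    <= reflect_sum f t.
Proof.
move=> a0 a1 tI.
set c := reflect_diff (derive1 f) a / (2 * a).
pose k s := reflect_sum f s - c * s ^+ 2.
suff : k a <= k t by rewrite /k; lra.
have dk (x : R) : -1 < x < 1 ->
    is_derive x 1 k (reflect_diff (derive1 f) x - c * (2 * x)).
  move=> xI; have NxI : -1 < - x < 1.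
    by move: xI => /andP[? ?]; apply/andP; split; lra.
  have D := is_deriveB (is_derive_reflect_sum (f_derivable xI) (f_derivable NxI))
    (is_deriveZ c (is_deriveX 2 (is_derive_id x 1))).
  by apply: (is_derive_eq D); rewrite expr1 /GRing.scale /= mulr1.
have k_derivable (p q : R) : -1 <= p -> q <= 1 ->
    forall x, x \in `]p, q[ -> derivable k x 1.
  move=> p1 q1 x; rewrite in_itv /= => /andP[px xq].
  by apply: (@ex_derive _ _ _ _ _ _ _ (dk x _)); apply/andP; split; lra.
have k_cont (p q : R) : -1 < p -> q < 1 -> {within `[p, q], continuous k}.
  move=> p1 q1; apply: derivable_within_continuous => x.
  rewrite in_itv /= => /andP[px xq]; apply: (k_derivable (-1) 1);
    by rewrite ?in_itv /=; try (apply/andP; split); lra.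
have dk_sign (x : R) : -1 < x < 1 ->
    a * derive1 k x = a * reflect_diff (derive1 f) x - x * reflect_diff (derive1 f) a.
  move=> xI; rewrite derive1E (@derive_val _ _ _ _ _ _ _ (dk x xI)) /c.
  by field; rewrite gt_eqF.
have slope := reflect_diff_slope_le df_derivable d2f_convex.
have k_min (s : R) : 0 <= s -> s < 1 -> k a <= k s.
  move=> s0 s1; have [sa|aS] := leP s a.
    have dk_le0 x : x \in `]0, a[ -> derive1 k x <= 0.
      rewrite in_itv /= => /andP[x0 xa].
      have xI : -1 < x < 1 by apply/andP; split; lra.
      have := dk_sign x xI; have := slope x a ltac:(lra) ltac:(lra) a1; nra.
    apply: (ler0_derive1_le_cc (k_derivable 0 a _ _) dk_le0 (k_cont 0 a _ _));
      rewrite ?in_itv /=; try (apply/andP; split); lra.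
  have dk_ge0 x : x \in `]a, s[ -> 0 <= derive1 k x.
    rewrite in_itv /= => /andP[ax xs].
    have xI : -1 < x < 1 by apply/andP; split; lra.
    have := dk_sign x xI; have := slope a x ltac:(lra) ltac:(lra) ltac:(lra); nra.
  apply: (ger0_derive1_le_cc (k_derivable a s _ _) dk_ge0 (k_cont a s _ _));
    rewrite ?in_itv /=; try (apply/andP; split); lra.
have k_even : k (- t) = k t by rewrite /k /reflect_sum opprK sqrrN (addrC (f (- t))).
move: tI => /andP[t1 t2]; have [t0|t0] := leP 0 t; first exact: k_min.
by rewrite -k_even; apply: k_min; lra.
Qed.

End ReflectSumMinorant.

Lemma reflect_sum_ge_at_1 (g : R -> \bar R) (q : R -> R) :
  g (-1) \is a fin_num -> g 1 != -oo%E ->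
  {within `[-1, 1[, continuous (fun t => fine (g t))} ->
  (fine (g t))%:E @[t --> at_left 1] --> g 1 ->
  {for 1, continuous q} ->
  (forall t, -1 < t < 1 -> q t <= reflect_sum (fun t => fine (g t)) t) ->
  ((q 1)%:E <= g 1%R + g (-1)%R)%E.
Proof.
move=> gN1_fin g1_ninfty g_cont g_left q_cont qle.
case g1E : (g 1) => [L| |] in g1_ninfty g_left *; last by [].
  2: by rewrite addye ?leey //; move: gN1_fin; rewrite fin_numE => /andP[].
have /fine_cvgP[_ gL] := g_left.
have g_cont0 : {within `[-1, 0], continuous (fun t => fine (g t))}.
  apply: continuous_subspaceW g_cont => x /=; rewrite !in_itv /= => /andP[? ?].
  by apply/andP; split; lra.
have [_ g_right _] := (continuous_within_itvP _ (ltrN10 R)).1 g_cont0.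
have gN_left : (fun t => fine (g (- t))) @ at_left 1 --> fine (g (-1)).
  by apply/cvg_at_leftNP; under [_ \o _]eq_fun do rewrite /= opprK.
rewrite -(fineK gN1_fin) -EFinD lee_fin.
apply: (ler_cvg_to (cvg_at_left_filter q_cont) (cvgD gL gN_left)).
near=> t; apply: qle; apply/andP; split.
  by near: t; apply: nbhs_left_gt; lra.
by near: t; exact: nbhs_left_lt.
Unshelve. all: end_near.
Qed.

Lemma reflect_sum_quadratic_minorant (g : R -> \bar R) (a : R) :
  (forall t, -1 <= t < 1 -> g t \is a fin_num) -> g 1 != -oo%E ->
  {within `[-1, 1[, continuous (fun t => fine (g t))} ->
  (forall t, -1 < t < 1 -> derivable (fun t => fine (g t)) t 1) ->
  (fine (g t))%:E @[t --> at_left 1] --> g 1 ->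
  (forall t, -1 < t < 1 -> derivable (derive1 (fun t => fine (g t))) t 1) ->
  convex_on_unit (derive1 (derive1 (fun t => fine (g t)))) ->
  0 < a -> a < 1 ->
  exists c, forall t, -1 <= t <= 1 ->
    ((reflect_sum (fun t => fine (g t)) a + c * (t ^+ 2 - a ^+ 2))%:E
      <= g t + g (- t)%R)%E.
Proof.
set G := fun t => fine (g t).
move=> g_fin g1_ninfty g_cont dG G_left ddG d2G_convex a0 a1.
set c := reflect_diff (derive1 G) a / (2 * a).
pose q t := reflect_sum G a + c * (t ^+ 2 - a ^+ 2).
have qle t : -1 < t < 1 -> q t <= reflect_sum G t.
  exact: reflect_sum_quadratic_ge.
have q_cont : {for 1, continuous q}.
  apply: continuousD; first exact: cst_continuous.
  apply: continuousM; first exact: cst_continuous.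
  by apply: continuousB; [exact: exprn_continuous | exact: cst_continuous].
have q1 : ((q 1)%:E <= g 1%R + g (-1)%R)%E.
  apply: reflect_sum_ge_at_1 => //; apply: g_fin; lra.
exists c => t /andP[t1 t2]; rewrite -/(q t).
have [->|t_neq1] := eqVneq t 1; first exact: q1.
have [->|t_neqN1] := eqVneq t (-1).
  by rewrite /q sqrrN opprK addeC.
have [gt_fin gNt_fin] : g t \is a fin_num /\ g (- t) \is a fin_num.
  by split; apply: g_fin; apply/andP; split; lra.
rewrite -(fineK gt_fin) -(fineK gNt_fin) -EFinD lee_fin.
by apply: qle; apply/andP; split; rewrite lt_neqAle ?t1 ?t2 ?andbT // eq_sym.
Qed.

End Reflection.

Section CrossPolytope.
Variables (R : realType) (d : nat).
Implicit Types (x z : 'rV[R]_d) (g : R -> \bar R).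

Lemma dotp_ebasis z j : dotp z (ebasis R j) = z 0 j.
Proof.
rewrite /dotp (bigD1 j) //= !mxE !eqxx mulr1 big1 ?addr0 // => k kj.
by rewrite mxE (negbTE kj) andbF mulr0.
Qed.

Lemma dotp_ebasisN z j : dotp z (- ebasis R j) = - z 0 j.
Proof.
rewrite -dotp_ebasis /dotp -sumrN; apply: eq_bigr => k _.
by rewrite mxE mulrN.
Qed.

Lemma potential_cross_polytope g z : potential g (cross_polytope R d) z
  = (\sum_(i < d) (g (z 0%R i) + g (- z 0%R i)%R))%E.
Proof.
rewrite /potential /cross_polytope big_cat !big_map /= -big_split /=.
by apply: eq_bigr => i _; rewrite dotp_ebasis dotp_ebasisN.
Qed.

Lemma sphere_coord_bound z i : z \in sphere R d -> -1 <= z 0 i <= 1.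
Proof.
rewrite inE /sphere /= => zS.
have : z 0 i ^+ 2 <= 1.
  rewrite -zS /dotp (bigD1 i) //= expr2 lerDl.
  by apply: sumr_ge0 => k _; rewrite -expr2 sqr_ge0.
by rewrite -ler_sqrt ?sqrtr_sqr ?sqrtr1 // ler_norml.
Qed.

Lemma potential_cross_polytope_ge g (a c m : R) z :
  (forall t, -1 <= t <= 1 -> ((m + c * (t ^+ 2 - a ^+ 2))%:E <= g t + g (- t)%R)%E) ->
  d%:R * a ^+ 2 = 1 -> z \in sphere R d ->
  ((d%:R * m)%:E <= potential g (cross_polytope R d) z)%E.
Proof.
move=> minor da2 zS; rewrite potential_cross_polytope.
have -> : d%:R * m = \sum_(i < d) (m + c * (z 0 i ^+ 2 - a ^+ 2)).
  rewrite big_split /= -mulr_sumr sumrB sumr_const card_ord.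
  move: zS; rewrite inE /sphere /dotp /= => ->.
  by rewrite sumr_const card_ord -[a ^+ 2 *+ d]mulr_natl da2 subrr mulr0 addr0 mulr_natl.
by rewrite -sumEFin; apply: lee_sum => i _; apply/minor/sphere_coord_bound.
Qed.

Lemma sign_vector_sphere (a : R) x : (forall i, x 0 i = a \/ x 0 i = - a) ->
  d%:R * a ^+ 2 = 1 -> x \in sphere R d.
Proof.
move=> xa da2; rewrite inE /sphere /dotp /= -da2 mulr_natl.
rewrite -[X in _ *+ X](card_ord d) -sumr_const.
by apply: eq_bigr => i _; case: (xa i) => ->; rewrite ?mulrNN expr2.
Qed.

Lemma potential_cross_polytope_sign_vector g (a : R) x :
  (forall i, x 0 i = a \/ x 0 i = - a) ->
  potential g (cross_polytope R d) x = (d%:R%:E * (g a + g (- a)%R))%E.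
Proof.
move=> xa; rewrite potential_cross_polytope mule_natl.
rewrite (eq_bigr (fun=> (g a + g (- a)%R)%E)) ?sumr_const ?card_ord // => i _.
by case: (xa i) => ->; rewrite ?opprK // addeC.
Qed.

End CrossPolytope.

Theorem theorem5p1 (R : realType) (d : nat) (g : R -> \bar R) :
  (2 <= d)%N ->
  (* g : [-1,1] -> (-oo, +oo], finite on [-1,1) *)
  (forall t : R, -1 <= t < 1 -> g t \is a fin_num) ->
  g 1 != -oo%E ->
  (* continuous on [-1,1) *)
  {within `[-1, 1[, continuous (fun t : R => fine (g t))} ->
  (* differentiable on (-1,1) *)
  (forall t : R, -1 < t < 1 -> derivable (fun t : R => fine (g t)) t 1) ->
  (* g(1) = lim_{t -> 1^-} g(t) *)
  ((fine (g t))%:E @[t --> at_left 1] --> g 1) ->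
  (* g'' exists on (-1,1) *)
  (forall t : R, -1 < t < 1 -> derivable (derive1 (fun t : R => fine (g t))) t 1) ->
  (* g'' is convex on (-1,1) *)
  (forall a b l : R, -1 < a < 1 -> -1 < b < 1 -> 0 <= l <= 1 ->
     derive1 (derive1 (fun t : R => fine (g t))) (l * a + (1 - l) * b)
       <= l * derive1 (derive1 (fun t : R => fine (g t))) a + (1 - l) * derive1 (derive1 (fun t : R => fine (g t))) b) ->
  (forall x : 'rV[R]_d,
     (forall i, x 0 i = 1 / Num.sqrt d%:R \/ x 0 i = - (1 / Num.sqrt d%:R)) ->
     x \in sphere R d /\
     forall z : 'rV[R]_d, z \in sphere R d ->
       (potential g (cross_polytope R d) x <= potential g (cross_polytope R d) z)%E)
  /\
  min_potential g (cross_polytope R d)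
    = (d%:R%:E * (g (1 / Num.sqrt d%:R)%R + g (- (1 / Num.sqrt d%:R))%R))%E.
Proof.
move=> d2 g_fin g1_ninfty g_cont dG g_left ddG d2G_convex.
set a := 1 / Num.sqrt d%:R.
have d_gt0 : (0 < d)%N by apply: ltn_trans d2.
have a_gt0 : 0 < a := inv_sqrt_natr_gt0 R d_gt0.
have a_lt1 : a < 1 := inv_sqrt_natr_lt1 R d2.
have da2 : d%:R * a ^+ 2 = 1 := natr_inv_sqrt_sq R d_gt0.
have [c minor] := reflect_sum_quadratic_minorant g_fin g1_ninfty g_cont dG g_left
  ddG d2G_convex a_gt0 a_lt1.
have pair_fin : (reflect_sum (fun t => fine (g t)) a)%:E = (g a + g (- a)%R)%E.
  by rewrite EFinD !fineK //; apply: g_fin; apply/andP; split; lra.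
have lower z : z \in sphere R d ->
    (d%:R%:E * (g a + g (- a)%R) <= potential g (cross_polytope R d) z)%E.
  by rewrite -pair_fin -EFinM; exact: potential_cross_polytope_ge minor da2.
split=> [x xa|].
  split; first exact: sign_vector_sphere xa da2.
  by move=> z zS; rewrite (potential_cross_polytope_sign_vector _ xa); exact: lower.
pose x0 : 'rV[R]_d := const_mx a.
have x0a i : x0 0 i = a \/ x0 0 i = - a by left; rewrite mxE.
apply/le_anti/andP; split.
  apply: ereal_inf_lbound; exists x0.
    by move: (sign_vector_sphere x0a da2); rewrite inE.
  exact: potential_cross_polytope_sign_vector.
by apply: le_ereal_inf_tmp => _ [z /mem_set zS <-]; exact: lower.
Qed.
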